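(* Let $G$ be a graph with an edge coloring $c$, and let $\mathcal{L}$ be the set of connected representing graphs of $(G,c)$. If $$\mathcal{C}_0=\bigcap_{L\in\mathcal{L}}\{c(e): e\in T(L)\}$$ is nonempty, then $(G,c)$ is a good edge coloring, witnessed by a connected representing graph $L^\ast$ and a set of cut edges $X\subseteq T(L^\ast)$ with $\mathcal{C}_0\subseteq c(X)$; that is, $X$ is nonempty, and every edge of $G$ joining two different components of $L^\ast - X$ has a color in $c(X)$.
   Context: A representing graph of a graph $G$ with edge coloring $c$ is a spanning subgraph of $G$ obtained by taking exactly one edge of each color used by $c$. For a set of edges $E$, $c(E)$ denotes the set of colors of edges in $E$. For a graph $L$, $T(L)$ denotes its set of cut edges (bridges). The pair $(G,c)$ is a good edge coloring if there is a connected representing graph $L$ of $G$ and a nonempty set of cut edges $X\subseteq T(L)$ such that each edge of $G$ between different components of $L-X$ is colored by a color in $c(X)$. *)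

(* An edge colouring is a function from vertex
   pairs to a finite colour type K (only its values on edges matter). *)
From mathcomp Require Import all_boot.
Set Implicit Arguments. Unset Strict Implicit. Unset Printing Implicit Defensive.

Section Defs.
Variables (V K : finType).

Definition simple_edges (EG : {set {set V}}) : Prop :=
  forall e, e \in EG -> #|e| = 2.

Definition adj (F : {set {set V}}) : rel V := fun x y => [set x; y] \in F.

Definition sconnected (F : {set {set V}}) : Prop :=
  forall x y : V, connect (adj F) x y.

Definition components (F : {set {set V}}) : {set {set V}} :=
  [set [set y | connect (adj F) x y] | x : V].

Definition ncomp (F : {set {set V}}) : nat := #|components F|.

Definition cut_edges (F : {set {set V}}) : {set {set V}} :=
  [set e in F | ncomp F < ncomp (F :\ e)].

Definition colors (c : {set V} -> K) (E : {set {set V}}) : {set K} := c @: E.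

Definition representing (EG : {set {set V}}) (c : {set V} -> K)
    (F : {set {set V}}) : Prop :=
  F \subset EG /\
  forall k, k \in colors c EG -> #|[set e in F | c e == k]| = 1.

Definition conn_representing EG c F : Prop :=
  representing EG c F /\ sconnected F.

Definition crossing_colored (EG : {set {set V}}) (c : {set V} -> K)
    (F X : {set {set V}}) : Prop :=
  forall x y : V, [set x; y] \in EG ->
    ~~ connect (adj (F :\: X)) x y -> c [set x; y] \in colors c X.

Definition good_coloring (EG : {set {set V}}) (c : {set V} -> K) : Prop :=
  exists F X, conn_representing EG c F /\ X != set0 /\
    X \subset cut_edges F /\ crossing_colored EG c F X.

Definition in_C0 (EG : {set {set V}}) (c : {set V} -> K) (k : K) : Prop :=
  forall F, conn_representing EG c F -> k \in colors c (cut_edges F).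

End Defs.

From mathcomp Require Import all_boot zify.
Set Implicit Arguments. Unset Strict Implicit. Unset Printing Implicit Defensive.

(* Call a set D of colours tight if deleting the edges of G with a colour in D
   leaves more than |D| components.  A connected representing graph L shows that
   at most |D| + 1 components are left: it suffices to delete the |D| edges of L
   with these colours.  By submodularity of the number of components, tight sets
   are closed under union.  Every colour k of C0 lies in a tight set: otherwise,
   by Rado's theorem on rainbow spanning trees, G minus its k-coloured edges has
   a connected representing graph, and adding one k-coloured edge of G to it gives
   a connected representing graph of G in which the only edge of colour k is not
   a bridge.  Let D be the largest tight set and X the edges of L coloured in D.
   Removing X from L leaves |X| + 1 components, so every edge of X is a bridge,
   and an edge of G between two components of L - X with a colour outside D
   would merge two of them in G minus the D-coloured edges, against tightness. *)

Section Components.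
Variable V : finType.
Implicit Types (A B E F H L S X : {set {set V}}) (e : {set V}).

Lemma adj_sym F : symmetric (adj F).
Proof. by move=> x y; rewrite /adj setUC. Qed.

Lemma connect_adj_sym F : connect_sym (adj F).
Proof. exact/sym_connect_sym/adj_sym. Qed.

Lemma connect_adjS F H : F \subset H -> subrel (connect (adj F)) (connect (adj H)).
Proof. by move=> sFH; apply: connect_sub => x y /(subsetP sFH) Hxy; apply: connect1. Qed.

Definition component F x := [set y | connect (adj F) x y].

Lemma componentsE F : components F = [set component F x | x : V].
Proof. by []. Qed.

Lemma eq_component F x y : (component F x == component F y) = connect (adj F) x y.
Proof.
apply/eqP/idP => [Exy | Fxy].
  by have := connect0 (adj F) y; rewrite -[_ y y]inE -/(component F y) -Exy inE.
apply/setP => z; rewrite !inE; apply/idP/idP; last exact: connect_trans.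
by apply: connect_trans; rewrite connect_adj_sym.
Qed.

Definition coarsen H (C : {set V}) := [set y | [exists x in C, connect (adj H) x y]].

Lemma coarsen_component F H x : F \subset H -> coarsen H (component F x) = component H x.
Proof.
move=> sFH; apply/setP => y; rewrite !inE; apply/existsP/idP => [[z /andP[]] | Hxy].
  by rewrite inE => /(connect_adjS sFH); apply: connect_trans.
by exists x; rewrite inE connect0.
Qed.

Lemma components_coarsen F H : F \subset H -> components H = coarsen H @: components F.
Proof.
by move=> sFH; rewrite !componentsE -imset_comp; apply: eq_imset => x /=; rewrite coarsen_component.
Qed.

Lemma ncompS F H : F \subset H -> ncomp H <= ncomp F.
Proof. by move=> sFH; rewrite /ncomp (components_coarsen sFH) leq_imset_card. Qed.

Lemma sconnectedP F : sconnected F <-> ncomp F <= 1.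
Proof.
split=> [conF | /card_le1_eqP ncomp1 x y].
  apply/card_le1_eqP => _ _ /imsetP[x _ ->] /imsetP[y _ ->].
  by apply/eqP; rewrite eq_component.
by rewrite -eq_component; apply/eqP/ncomp1; apply: imset_f.
Qed.

Definition bridges F e :=
  [exists x, exists y, (e == [set x; y]) && ~~ connect (adj F) x y].

Lemma bridges_pair F x y : ~~ connect (adj F) x y -> bridges F [set x; y].
Proof. by move=> nFxy; apply/existsP; exists x; apply/existsP; exists y; rewrite eqxx. Qed.

Lemma bridgesS F H e : F \subset H -> bridges H e -> bridges F e.
Proof.
move=> sFH /existsP[x /existsP[y /andP[exy nHxy]]]; rewrite (eqP exy) bridges_pair //.
by apply: contra nHxy; apply: connect_adjS.
Qed.

Lemma sconnected_bridges F e : sconnected F -> ~~ bridges F e.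
Proof. by move=> conF; apply/existsP => -[x /existsP[y]]; rewrite conF andbF. Qed.

Lemma connect_setU1 F x y a b :
  connect (adj ([set x; y] |: F)) a b ->
  connect (adj F) a b ||
  (connect (adj F) x a || connect (adj F) y a) &&
  (connect (adj F) x b || connect (adj F) y b).
Proof.
set near := fun z => connect (adj F) x z || connect (adj F) y z.
have near_xy u v : [set u; v] = [set x; y] -> near u.
  move=> Euv; have : u \in [set x; y] by rewrite -Euv set21.
  by rewrite /near !inE => /orP[] /eqP->; rewrite connect0 ?orbT.
have near_F u v : connect (adj F) u v -> near u -> near v.
  by rewrite /near => Fuv /orP[] /connect_trans/(_ Fuv) ->; rewrite ?orbT.
pose p := [pred z | connect (adj F) a z || near a && near z].
have closed_p : closed (adj ([set x; y] |: F)) p.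
  apply: intro_closed; first exact: connect_adj_sym.
  move=> u v; rewrite /adj !inE => /orP[/eqP Euv | /(@connect1 _ (adj F) u v) Fuv].
    have nv : near v by apply: (near_xy v u); rewrite setUC.
    move=> /orP[Fau | /andP[na _]]; last by rewrite na nv orbT.
    by rewrite nv (near_F u a) ?orbT ?(near_xy u v) // connect_adj_sym.
  move=> /orP[Fau | /andP[na nu]]; first by rewrite (connect_trans Fau Fuv).
  by rewrite na (near_F u v) ?orbT.
move=> Fab; have := closed_connect closed_p Fab.
by rewrite !inE connect0 /near => <-.
Qed.

Lemma ncomp_setU1_connected F e : ~~ bridges F e -> ncomp (e |: F) = ncomp F.
Proof.
move=> nbrFe; rewrite /ncomp; suff -> : components (e |: F) = components F by [].
rewrite !componentsE; apply: eq_imset => a; apply/setP => b; rewrite !inE.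
apply/idP/idP; last exact: connect_adjS (subsetUr _ _) a b.
apply: connect_sub => u v; rewrite /adj !inE => /orP[/eqP Euv | Fuv]; last exact: connect1.
by apply: contraNT nbrFe; rewrite -Euv; apply: bridges_pair.
Qed.

Lemma ncomp_setU1_bridge F x y :
  ~~ connect (adj F) x y -> ncomp F = (ncomp ([set x; y] |: F)).+1.
Proof.
move=> nFxy; set F' := [set x; y] |: F; have sFF' : F \subset F' := subsetUr _ _.
rewrite /ncomp (components_coarsen sFF'); set P := components F.
set Cy := component F y; have PCy : Cy \in P by apply: imset_f.
have PCx : component F x \in P :\ Cy by rewrite !inE eq_component nFxy imset_f.
have inj_coarsen : {in P :\ Cy &, injective (coarsen F')}.
  move=> C1 C2 /setD1P[nCya /imsetP[a _ EC1]] /setD1P[nCyb /imsetP[b _ EC2]].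
  subst C1 C2.
  rewrite !coarsen_component // => /eqP; rewrite eq_component => /connect_setU1.
  rewrite eq_component connect_adj_sym in nCya; rewrite eq_component connect_adj_sym in nCyb.
  rewrite (negbTE nCya) (negbTE nCyb) !orbF => /orP[Fab | /andP[Fxa Fxb]]; apply/eqP.
    by rewrite eq_component.
  by rewrite eq_component (connect_trans _ Fxb) // connect_adj_sym.
have -> : coarsen F' @: P = coarsen F' @: (P :\ Cy).
  rewrite -{1}(setD1K PCy) imsetU1; apply/setUidPr; rewrite sub1set.
  suff -> : coarsen F' Cy = coarsen F' (component F x) by apply: imset_f.
  rewrite !coarsen_component //; apply/eqP; rewrite eq_component connect_adj_sym.
  by apply: connect1; rewrite /adj !inE eqxx.
by rewrite (card_in_imset inj_coarsen) (cardsD1 Cy P) PCy.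
Qed.

Lemma ncomp_setU1 F e : ncomp F = ncomp (e |: F) + bridges F e.
Proof.
have [/existsP[x /existsP[y /andP[/eqP-> nFxy]]] | nbrFe] := boolP (bridges F e).
  by rewrite addn1 -ncomp_setU1_bridge.
by rewrite ncomp_setU1_connected ?addn0.
Qed.

Lemma ncomp_setD1 F e : ncomp (F :\ e) <= (ncomp F).+1.
Proof.
rewrite (ncomp_setU1 _ e) -addn1 leq_add ?leq_b1 // ncompS //.
by apply/subsetP => f Ff; rewrite !inE Ff andbT orbN.
Qed.

Lemma ncomp_setD F S : ncomp (F :\: S) <= ncomp F + #|S|.
Proof.
have [n] := ubnP #|S|; elim: n S => // n IH S ltSn.
have [-> | [s Ss]] := set_0Vmem S; first by rewrite setD0 cards0 addn0.
have -> : F :\: S = (F :\: (S :\ s)) :\ s by rewrite setDDl setUC setD1K.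
rewrite (cardsD1 s S) Ss add1n ltnS in ltSn *.
by apply: leq_trans (ncomp_setD1 _ s) _; rewrite addnS ltnS IH.
Qed.

Lemma ncomp_setU1_submod E F e :
  E \subset F -> ncomp F + ncomp (e |: E) <= ncomp E + ncomp (e |: F).
Proof.
move=> sEF; rewrite (ncomp_setU1 E e) (ncomp_setU1 F e).
by have := @bridgesS E F e sEF; case: (bridges E e) (bridges F e) => [] [] /=; lia.
Qed.

Lemma ncomp_setU_submod A B S :
  A \subset B -> ncomp B + ncomp (A :|: S) <= ncomp A + ncomp (B :|: S).
Proof.
move=> sAB; have [n] := ubnP #|S|; elim: n S => // n IH S ltSn.
have [-> | [s Ss]] := set_0Vmem S; first by rewrite !setU0 addnC.
rewrite (cardsD1 s S) Ss add1n ltnS in ltSn.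
rewrite -(setD1K Ss) !(setUCA _ [set s]).
have := ncomp_setU1_submod s (setSU (S :\ s) sAB); have := IH _ ltSn.
(* The atoms below differ only by [reverse_coercion] in the finType of [{set V}],
   which [lia] does not see through. *)
by rewrite /reverse_coercion; lia.
Qed.

Lemma ncomp_submod E1 E2 :
  ncomp E1 + ncomp E2 <= ncomp (E1 :&: E2) + ncomp (E1 :|: E2).
Proof.
by have := ncomp_setU_submod E2 (subsetIl E1 E2); rewrite (setUidPr (subsetIr _ _)).
Qed.

Lemma sconnected_cut_edges L X :
  sconnected L -> X \subset L -> #|X| < ncomp (L :\: X) -> X \subset cut_edges L.
Proof.
move=> /sconnectedP conL sXL ltX; apply/subsetP => e Xe; rewrite inE (subsetP sXL) //=.
have := ncomp_setD (L :\ e) (X :\ e); rewrite setDDl setD1K //.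
by rewrite (cardsD1 e X) Xe in ltX; lia.
Qed.

Lemma ncomp_le_connect F H x y :
  F \subset H -> ncomp F <= ncomp H -> [set x; y] \in H -> connect (adj F) x y.
Proof.
move=> sFH leFH Hxy; apply: contraTT leFH => /ncomp_setU1_bridge->.
by rewrite -ltnNge ltnS ncompS // subUset sub1set Hxy.
Qed.

End Components.

Lemma cardsUI_setIr (T : finType) (A B C : {set T}) :
  #|(A :|: B) :&: C| + #|(A :&: B) :&: C| = #|A :&: C| + #|B :&: C|.
Proof. by rewrite setIUl setIIl cardsUI. Qed.

Section Colorings.
Variables (V K : finType) (c : {set V} -> K).
Implicit Types (EG F L : {set {set V}}) (D : {set K}).

Definition del_colors EG D := [set e in EG | c e \notin D].
Definition with_colors L D := [set e in L | c e \in D].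

Lemma del_colorsSl EG F D : EG \subset F -> del_colors EG D \subset del_colors F D.
Proof. by move=> sEF; apply/subsetP => e; rewrite !inE => /andP[/(subsetP sEF)-> ->]. Qed.

Lemma del_colorsU EG D1 D2 :
  del_colors EG (D1 :|: D2) = del_colors EG D1 :&: del_colors EG D2.
Proof. by apply/setP => e; rewrite !inE negb_or andbACA andbb. Qed.

Lemma del_colorsI EG D1 D2 :
  del_colors EG (D1 :&: D2) = del_colors EG D1 :|: del_colors EG D2.
Proof. by apply/setP => e; rewrite !inE negb_and andb_orr. Qed.

Lemma del_colors_comp EG D1 D2 :
  del_colors (del_colors EG D1) D2 = del_colors EG (D1 :|: D2).
Proof. by apply/setP => e; rewrite !inE negb_or andbA. Qed.

Lemma del_colors_setD1 EG D x :
  c x \in D -> del_colors (EG :\ x) D = del_colors EG D.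
Proof.
move=> Dcx; apply/setP => e; rewrite !inE; case: eqVneq => //= ->.
by rewrite Dcx andbF.
Qed.

Lemma setD_with_colors L D : L :\: with_colors L D = del_colors L D.
Proof. by apply/setP => e; rewrite !inE negb_and andb_orl andNb andbC. Qed.

Lemma colors_with_colors L D : colors c (with_colors L D) = D :&: colors c L.
Proof.
apply/setP => k; rewrite inE; apply/imsetP/andP => [[e] | [Dk /imsetP[e Le ek]]].
  by rewrite inE => /andP[Le Dce] ->; rewrite Dce imset_f.
by exists e; rewrite // inE Le -ek.
Qed.

Lemma representing_inj EG L : representing EG c L -> {in L &, injective c}.
Proof.
case=> sLE repL e1 e2 Le1 Le2 ce12.
have /card_le1_eqP := eq_leq (repL _ (imset_f c (subsetP sLE _ Le1))).
by apply; rewrite inE ?Le1 ?Le2 ?ce12 eqxx.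
Qed.

Lemma representing_colors EG L : representing EG c L -> colors c L = colors c EG.
Proof.
case=> sLE repL; apply/eqP; rewrite eqEsubset imsetS //=.
apply/subsetP => k /repL /eqP /cards1P[e Ee].
have : e \in [set e in L | c e == k] by rewrite Ee set11.
by rewrite inE => /andP[Le /eqP <-]; apply: imset_f.
Qed.

Lemma card_with_colors EG L D :
  representing EG c L -> #|with_colors L D| = #|D :&: colors c EG|.
Proof.
move=> repL; rewrite -(representing_colors repL) -colors_with_colors card_in_imset //.
by move=> e1 e2; rewrite !inE => /andP[Le1 _] /andP[Le2 _]; apply: (representing_inj repL).
Qed.

Lemma conn_representing_ncomp_del_colors EG L D :
  conn_representing EG c L -> ncomp (del_colors L D) <= #|D :&: colors c EG|.+1.
Proof.
move=> [repL /sconnectedP conL].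
rewrite -setD_with_colors -(card_with_colors D repL) -add1n.
by apply: leq_trans (ncomp_setD _ _) _; rewrite leq_add2r.
Qed.

Definition rado_cond EG :=
  [forall D, ncomp (del_colors EG D) <= #|D :&: colors c EG|.+1].

Lemma conn_representing_rado_cond EG L : conn_representing EG c L -> rado_cond EG.
Proof.
move=> conL; have [[sLE _] _] := conL; apply/forallP => D.
exact: leq_trans (ncompS (del_colorsSl D sLE)) (conn_representing_ncomp_del_colors D conL).
Qed.

Lemma colors_setD1 EG x y :
  y \in EG -> x != y -> c x = c y -> colors c (EG :\ x) = colors c EG.
Proof.
move=> Ey nxy cxy; apply/eqP; rewrite eqEsubset imsetS ?subsetDl //=.
apply/subsetP => _ /imsetP[e Ee ->]; case: (eqVneq e x) => [-> | nex].
  by rewrite cxy imset_f // !inE eq_sym nxy.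
by rewrite imset_f // !inE nex.
Qed.

Lemma conn_representing_setD1 EG F x y : y \in EG -> x != y -> c x = c y ->
  conn_representing (EG :\ x) c F -> conn_representing EG c F.
Proof.
move=> Ey nxy cxy [[sFE repF] conF]; split=> //; split.
  exact: subset_trans sFE (subsetDl _ _).
by move=> k; rewrite -(colors_setD1 Ey nxy cxy); apply: repF.
Qed.

Lemma rado_cond_setD1 EG x y : x \in EG -> y \in EG -> x != y -> c x = c y ->
  rado_cond EG -> rado_cond (EG :\ x) || rado_cond (EG :\ y).
Proof.
(* Violating sets D1 for EG :\ x and D2 for EG :\ y avoid the colour i of x and y;
   submodularity for the two violating subgraphs then contradicts the condition
   for EG at D1 :&: D2 and at i |: (D1 :|: D2). *)
move=> Ex Ey nxy cxy /forallP condEG; apply/norP; rewrite /rado_cond.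
case=> /forallPn[D1 +] /forallPn[D2 +]; rewrite -!ltnNge.
rewrite (colors_setD1 Ey nxy cxy) (colors_setD1 Ex _ (esym cxy)) 1?eq_sym //.
move=> fail1 fail2; set i := c x; set col := colors c EG in condEG fail1 fail2 *.
have iD1 : i \notin D1.
  by apply: contraTN fail1 => iD1; rewrite del_colors_setD1 // -leqNgt condEG.
have iD2 : i \notin D2.
  by apply: contraTN fail2 => iD2; rewrite del_colors_setD1 -?cxy // -leqNgt condEG.
set E1 := del_colors (EG :\ x) D1 in fail1 *; set E2 := del_colors (EG :\ y) D2 in fail2 *.
have sub_cap : del_colors EG (i |: (D1 :|: D2)) \subset E1 :&: E2.
  apply/subsetP => e; rewrite !inE => /andP[Ee]; rewrite !negb_or => /and3P[nie nD1 nD2].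
  rewrite Ee nD1 nD2 !andbT.
  by apply/andP; split; apply: contraNneq nie => ->; rewrite -?cxy.
have sub_cup : del_colors EG (D1 :&: D2) \subset E1 :|: E2.
  apply/subsetP => e; rewrite !inE negb_and => /andP[-> ]; rewrite !andbT.
  case: (eqVneq e x) => [-> _ | nex]; first by rewrite nxy iD2 orbT.
  case: (eqVneq e y) => [-> _ | ney]; first by rewrite -cxy iD1.
  by [].
have card_i : #|(i |: (D1 :|: D2)) :&: col| = (#|(D1 :|: D2) :&: col|).+1.
  rewrite setIUl (setIidPl _) ?sub1set ?imset_f // cardsU1 !inE.
  by rewrite (negbTE iD1) (negbTE iD2).
have := ncomp_submod E1 E2; have := ncompS sub_cap; have := ncompS sub_cup.
have := condEG (D1 :&: D2); have := condEG (i |: (D1 :|: D2)).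
rewrite card_i; have := cardsUI_setIr D1 D2 col; lia.
Qed.

Lemma injective_conn_representing EG :
  {in EG &, injective c} -> rado_cond EG -> conn_representing EG c EG.
Proof.
move=> injc /forallP/(_ set0); rewrite set0I cards0.
have -> : del_colors EG set0 = EG by apply/setP => e; rewrite !inE andbT.
move=> /sconnectedP conEG; split=> //; split=> // _ /imsetP[e Ee ->].
apply/eqP/cards1P; exists e; apply/setP => f; rewrite !inE.
by apply/andP/eqP => [[Ef /eqP /injc] | ->]; [apply | rewrite Ee eqxx].
Qed.

Theorem rado_conn_representing EG : rado_cond EG -> exists F, conn_representing EG c F.
Proof.
have [n] := ubnP #|EG|; elim: n EG => // n IH EG ltEn condEG.
have [twins | no_twins] :=
  boolP [exists x in EG, exists y in EG, (x != y) && (c x == c y)]; last first.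
  exists EG; apply: injective_conn_representing => // x y Ex Ey /eqP cxy.
  apply/eqP; apply: contraNT no_twins => nxy.
  by apply/exists_inP; exists x => //; apply/exists_inP; exists y; rewrite ?nxy ?cxy.
case/exists_inP: twins => x Ex /exists_inP[y Ey /andP[nxy /eqP cxy]].
wlog condEGx : x y Ex Ey nxy cxy / rado_cond (EG :\ x).
  move=> wlog_x; have := rado_cond_setD1 Ex Ey nxy cxy condEG.
  by case/orP; [apply: (wlog_x x y) | apply: (wlog_x y x); rewrite // eq_sym].

rewrite (cardsD1 x) Ex add1n ltnS in ltEn.
have [F conF] := IH _ ltEn condEGx.
by exists F; apply: conn_representing_setD1 Ey nxy cxy conF.
Qed.

End Colorings.

Section TightSets.
Variables (V K : finType) (EG : {set {set V}}) (c : {set V} -> K).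
Variable L : {set {set V}}.
Hypothesis conL : conn_representing EG c L.
Implicit Types (F : {set {set V}}) (D : {set K}).

Definition tight D := #|D :&: colors c EG| < ncomp (del_colors c EG D).

Lemma tight_setU D1 D2 : tight D1 -> tight D2 -> tight (D1 :|: D2).
Proof.
rewrite /tight => tD1 tD2.
have := ncomp_submod (del_colors c EG D1) (del_colors c EG D2).
rewrite -del_colorsU -del_colorsI.
have := forallP (conn_representing_rado_cond conL) (D1 :&: D2).
by have := cardsUI_setIr D1 D2 (colors c EG); lia.
Qed.

Lemma tight_max D0 : tight D0 -> exists2 Dm, tight Dm & forall D, tight D -> D \subset Dm.
Proof.
move=> tD0; have [Dm tDm maxDm] := @arg_maxnP _ D0 tight (fun D => #|D|) tD0.
exists Dm => // D tD; apply/setUidPr/eqP.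
by rewrite eq_sym eqEcard subsetUr; apply: maxDm; apply: tight_setU.
Qed.

Lemma in_C0_colors k : in_C0 EG c k -> k \in colors c EG.
Proof.
move=> /(_ L conL) /imsetP[e]; rewrite inE => /andP[Le _] ->.
by rewrite -(representing_colors (proj1 conL)) imset_f.
Qed.

Lemma conn_representing_setU1 k F e :
  conn_representing (del_colors c EG [set k]) c F -> e \in EG -> c e = k ->
  conn_representing EG c (e |: F).
Proof.
move=> [[sFk repF] conF] Ee cek; split; last first.
  by move=> a b; apply: connect_adjS (conF a b); apply: subsetUr.
have colF f : f \in F -> (f \in EG) && (c f != k).
  by move/(subsetP sFk); rewrite !inE.
split.
  by apply/subsetP => f; rewrite !inE => /orP[/eqP-> // | /colF/andP[]].
move=> _ /imsetP[f Ef ->]; case: (eqVneq (c f) k) => [-> | nfk].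
  apply/eqP/cards1P; exists e; apply/setP => g; rewrite !inE.
  case: (eqVneq g e) => [-> | _] /=; first by rewrite cek eqxx.
  by case Fg: (g \in F); rewrite //= (negbTE (proj2 (andP (colF _ Fg)))).
rewrite -(repF (c f)) ?imset_f ?inE ?Ef ?nfk //; apply: eq_card => g; rewrite !inE.
by case: (eqVneq g e) => [-> | _] //=; rewrite cek eq_sym (negbTE nfk) andbF.
Qed.

Lemma in_C0_no_conn_representing k F :
  in_C0 EG c k -> ~ conn_representing (del_colors c EG [set k]) c F.
Proof.
move=> C0k conFk; have [[sFk _] conF] := conFk.
have /imsetP[e Ee cek] := in_C0_colors C0k.
have nFe : e \notin F by apply/negP => /(subsetP sFk); rewrite !inE -cek eqxx andbF.
have /imsetP[f] := C0k _ (conn_representing_setU1 conFk Ee (esym cek)).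
rewrite !inE => /andP[/orP[/eqP-> | Ff] cut_f] ckf; last first.
  by have := subsetP sFk f Ff; rewrite !inE -ckf eqxx andbF.
move: cut_f; rewrite setU1K // (ncomp_setU1 F e).
by rewrite (negbTE (sconnected_bridges e conF)) addn0 ltnn.
Qed.

Lemma in_C0_tight k : in_C0 EG c k -> exists2 D, tight D & k \in D.
Proof.
move=> C0k; set Gk := del_colors c EG [set k].
have : ~~ rado_cond c Gk.
  by apply/negP => /rado_conn_representing[F]; apply: in_C0_no_conn_representing.
case/forallPn => D; rewrite -ltnNge del_colors_comp => ltD.
exists (k |: D); last exact: setU11.
have sub_k : (k |: D) :&: colors c EG \subset k |: (D :&: colors c Gk).
  apply/subsetP => j; rewrite !inE => /andP[+ /imsetP[e Ee jE]]; rewrite jE.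
  move=> /orP[/eqP-> | Dce]; first by rewrite eqxx.
  by case: eqVneq => //= nek; rewrite Dce imset_f // !inE Ee nek.
have := subset_leq_card sub_k; rewrite /tight cardsU1; case: (_ \notin _) => /=; lia.
Qed.

Lemma tight_cut_edges D : tight D -> with_colors c L D \subset cut_edges L.
Proof.
move=> tD; have [repL Lcon] := conL; have [sLE _] := repL.
apply: sconnected_cut_edges => //; first by apply/subsetP => e; rewrite inE => /andP[].
rewrite setD_with_colors (card_with_colors _ repL).
exact: leq_trans tD (ncompS (del_colorsSl c D sLE)).
Qed.

Lemma tight_crossing_colored D : tight D -> crossing_colored EG c L (with_colors c L D).
Proof.
move=> tD x y Exy; have [repL _] := conL; have [sLE _] := repL.
rewrite setD_with_colors colors_with_colors (representing_colors repL) inE imset_f // andbT.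
apply: contraR => nDxy; apply: (@ncomp_le_connect _ _ (del_colors c EG D)).
- exact: del_colorsSl.
- exact: leq_trans (conn_representing_ncomp_del_colors D conL) tD.
- by rewrite inE Exy.
Qed.

End TightSets.

Theorem lemma9 (V K : finType) (EG : {set {set V}}) (c : {set V} -> K) :
  simple_edges EG ->
  (exists F, conn_representing EG c F) ->
  (exists k, in_C0 EG c k) ->
  good_coloring EG c /\
  exists F X, [/\ conn_representing EG c F, X != set0,
    X \subset cut_edges F, crossing_colored EG c F X &
    forall k, in_C0 EG c k -> k \in colors c X].
Proof.
move=> _ [L conL] [k0 C0k0].
have [D0 tD0 _] := in_C0_tight conL C0k0.
have [D tD maxD] := tight_max conL tD0.
set X := with_colors c L D.
have C0X k : in_C0 EG c k -> k \in colors c X.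
  move=> C0k; rewrite colors_with_colors (representing_colors (proj1 conL)) inE.
  have [Dk tDk kDk] := in_C0_tight conL C0k.
  by rewrite (subsetP (maxD _ tDk) _ kDk) (in_C0_colors conL C0k).
have X_neq0 : X != set0.
  by apply: contraTneq (C0X _ C0k0) => ->; rewrite /colors imset0 inE.
have cutX := tight_cut_edges conL tD; have crossX := tight_crossing_colored conL tD.
by split; exists L, X.
Qed.
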